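(* Consider a slotted system with diversity. There are $N$ users, $N_{sub}\ge2$ sub-carriers and slots $1,\dots,T$, where $0<\alpha<1$, $\alpha T\in\mathbb Z$ and $(1-\alpha)T$ is even. The BS uses pmfs $\mathbf p$ on users and $\mathbf q$ on sub-carriers: in every slot, independently, it chooses user $i$ with probability $p_i$ and sub-carrier $j$ with probability $q_j$, and transmits to that user on that sub-carrier. An adversarial blocking matrix is $\sigma\in\{0,1\}^{N_{sub}\times T}$, where $\sigma_j(t)=0$ means sub-carrier $j$ is blocked in slot $t$. It is feasible if $\sum_{j,t}(1-\sigma_j(t))\le\alpha T$ and at most one sub-carrier is blocked per slot. Ages satisfy $a_i(1)=1$, $a_i(t+1)=1$ if user $i$ is chosen in slot $t$ on an unblocked sub-carrier, and $a_i(t+1)=a_i(t)+1$ otherwise. The payoff is $\Delta^{\mathbf p,\mathbf q,\sigma}=\frac1T\sum_{t=1}^T\frac1N\sum_i\mathbb E[a_i(t)]$; the BS minimizes it and the adversary maximizes it. Let $\sigma'$ be the adversarial strategy that, in each slot $t\in\{\frac{(1-\alpha)T}2+1,\dots,\frac{(1+\alpha)T}2\}$, blocks one sub-carrier chosen uniformly at random (independently), and blocks nothing in other slots. Let $\bar{\mathbf p}$ and $\bar{\mathbf q}$ be the uniform pmfs. Then $(\bar{\mathbf p},\bar{\mathbf q},\sigma')$ is a Nash equilibrium. That is: - $(\bar{\mathbf p},\bar{\mathbf q})$ minimizes $\Delta^{\mathbf p,\mathbf q,\sigma'}$ over all pmfs $\mathbf p,\mathbf q$; and - $\sigma'$ attains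 $\max_{\sigma\text{ feasible}}\Delta^{\bar{\mathbf p},\bar{\mathbf q},\sigma}$.
   Context: The expectation under $\sigma'$ includes the adversary's randomness. *)

From HB Require Import structures.
From mathcomp Require Import all_boot all_order all_algebra.
Set Implicit Arguments. Unset Strict Implicit. Unset Printing Implicit Defensive.
Import Order.TTheory GRing.Theory Num.Theory.
Local Open Scope ring_scope.

Section AoI.
Variables (R : realFieldType) (N Nsub T : nat).

Definition is_pmf (I : finType) (p : I -> R) : Prop :=
  (forall i, 0 <= p i) /\ \sum_i p i = 1.

Definition uniform_pmf (I : finType) : I -> R := fun _ => (#|I|%:R)^-1.

(* blocking matrix: sigma j t = true  <=>  sigma_j(t) = 1 (sub-carrier j NOT blocked
   in slot t); slots are 0-indexed: t : 'I_T stands for slot t+1. *)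
Definition blocking := 'I_Nsub -> 'I_T -> bool.

Definition feasible (alpha : R) (sigma : blocking) : Prop :=
  ((\sum_(j : 'I_Nsub) \sum_(t : 'I_T) (~~ sigma j t : nat))%:R <= alpha * T%:R)
  /\ (forall t : 'I_T, #|[set j | ~~ sigma j t]| <= 1)%N.

Definition bs_outcome := {ffun 'I_T -> 'I_N * 'I_Nsub}.

Definition bs_prob (p : 'I_N -> R) (q : 'I_Nsub -> R) (w : bs_outcome) : R :=
  \prod_(t : 'I_T) (p (w t).1 * q (w t).2).

Definition served (sigma : blocking) (w : bs_outcome) (i : 'I_N) (k : nat) : bool :=
  [exists t : 'I_T, [&& val t == k, (w t).1 == i & sigma (w t).2 t]].

(* age a_i(k+1) (k 0-indexed): a_i(1) = 1, a_i(t+1) = 1 if served in t, else a_i(t)+1 *)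
Fixpoint age (sigma : blocking) (w : bs_outcome) (i : 'I_N) (k : nat) : nat :=
  match k with
  | 0 => 1
  | k'.+1 => if served sigma w i k' then 1 else (age sigma w i k').+1
  end.

Definition exp_age (p : 'I_N -> R) (q : 'I_Nsub -> R) (sigma : blocking)
  (i : 'I_N) (k : nat) : R :=
  \sum_(w : bs_outcome) bs_prob p q w * (age sigma w i k)%:R.

Definition Delta (p : 'I_N -> R) (q : 'I_Nsub -> R) (sigma : blocking) : R :=
  (T%:R)^-1 * \sum_(t : 'I_T) ((N%:R)^-1 * \sum_(i : 'I_N) exp_age p q sigma i t).

(* the randomized adversary sigma': independent uniform sub-carrier per slot;
   in slot t (0-indexed) inside the window [(1-a)T/2, (1+a)T/2) the chosen
   sub-carrier is blocked, otherwise nothing is blocked *)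
Definition in_window (alpha : R) (t : 'I_T) : bool :=
  ((1 - alpha) * T%:R / 2 <= t%:R) && (t%:R + 1 <= (1 + alpha) * T%:R / 2).

Definition adv_outcome := {ffun 'I_T -> 'I_Nsub}.

Definition sigma' (alpha : R) (v : adv_outcome) : blocking :=
  fun j t => ~~ (in_window alpha t && (v t == j)).

Definition Delta_sigma' (alpha : R) (p : 'I_N -> R) (q : 'I_Nsub -> R) : R :=
  \sum_(v : adv_outcome) (\prod_(t : 'I_T) (Nsub%:R)^-1) * Delta p q (sigma' alpha v).

End AoI.
Arguments Delta_sigma' {R N Nsub} T.
Arguments Delta {R N Nsub} T.
Arguments feasible {R Nsub T}.
Arguments is_pmf {R I}.
Arguments uniform_pmf {R}.

(* Against the randomized adversary sigma', the sub-carrier chosen by the BS is unblocked with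
   probability 1 - [t in window] / Nsub whatever q is, so by independence of the slots the payoff
   is (1/T)(1/N) sum_i Phi(p_i), where Phi is a sum of products of factors 1 - x c_t with
   c_t in [0, 1]. Such a Phi has a supporting line at every point of [0, 1], hence
   sum_i Phi(p_i) >= N Phi(1/N).

   Against the uniform BS, a user misses slot t with probability b + d z_t, where b = 1 - 1/N,
   d = 1/(N Nsub) and z_t records whether some sub-carrier is blocked in t; the payoff is the sum,
   over all intervals of slots, of the products of these probabilities. Expanded to second order
   in d, with the remainder kept as such a product and then bounded by (b + d)^r (with equality for
   a contiguous block), both coefficients become sums over "layers": the blocked slots v preceded
   by at least j other blocked slots, weighted by S_(v-j) S_(T-2-v) with S_n = 1 + b + ... + b^n.
   As S_m S_n grows when m + n is fixed and m, n get balanced, each layer is largest when the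
   blocked slots form a single block centred in [0, T), which is what sigma' does. *)

From HB Require Import structures.
From mathcomp Require Import all_boot all_order all_algebra.
From mathcomp Require Import zify ring.
Set Implicit Arguments. Unset Strict Implicit. Unset Printing Implicit Defensive.
Import Order.TTheory GRing.Theory Num.Theory.
Local Open Scope ring_scope.

Lemma ler_sum_threshold (R : numDomainType) (I : eqType) (r : seq I) (X K : pred I)
    (phi : I -> R) (c : R) :
  0 <= c -> \sum_(i <- r) (X i)%:R <= \sum_(i <- r) (K i)%:R :> R ->
  {in r, forall i, X i -> ~~ K i -> phi i <= c} ->
  {in r, forall i, K i -> ~~ X i -> c <= phi i} ->
  \sum_(i <- r) (X i)%:R * phi i <= \sum_(i <- r) (K i)%:R * phi i.
Proof.
move=> c_ge0 le_XK le_c ge_c.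
have shift (Y : pred I) : \sum_(i <- r) (Y i)%:R * phi i
    = \sum_(i <- r) (Y i)%:R * (phi i - c) + c * \sum_(i <- r) (Y i)%:R.
  by rewrite big_distrr -big_split /=; apply: eq_bigr => i _; ring.
rewrite !shift lerD ?ler_wpM2l //; rewrite big_seq_cond [X in _ <= X]big_seq_cond.
apply: ler_sum => i /andP[ir _].
case Xi: (X i); case Ki: (K i); rewrite ?mul1r ?mul0r //.
- by rewrite subr_le0 le_c ?Ki.
- by rewrite subr_ge0 ge_c ?Xi.
Qed.

Lemma sum_nat_triangle (V : nmodType) (F : nat -> nat -> V) n :
  \sum_(0 <= c < n) \sum_(0 <= v < c) F v c = \sum_(0 <= v < n) \sum_(v.+1 <= c < n) F v c.
Proof.
elim: n => [|n IH]; first by rewrite !big_geq.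
rewrite big_nat_recr //= IH [in RHS]big_nat_recr //= [X in _ = _ + X]big_geq // addr0.
by rewrite -big_split /=; apply: eq_big_nat => v /andP[_ vn]; rewrite big_nat_recr.
Qed.

Lemma sum_nat_indicator (R : pzSemiRingType) (a c n : nat) :
  \sum_(0 <= v < n) ((a <= v < c)%N)%:R = ((minn n c - a)%N)%:R :> R.
Proof.
elim: n => [|n IH]; first by rewrite big_geq // min0n sub0n.
rewrite big_nat_recr //= IH -natrD; congr _%:R.
by case: (leqP a n) => ?; case: (ltnP n c) => ? /=; lia.
Qed.

Section Blocked.
Variables (R : comPzRingType) (z : nat -> bool).

Definition nblocked a c := (\sum_(a <= s < c) z s)%N.

Lemma nblocked_recr a c : (a <= c)%N -> nblocked a c.+1 = (nblocked a c + z c)%N.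
Proof. by move=> ac; rewrite /nblocked big_nat_recr. Qed.

Lemma nblocked_ltn a c : (a < c)%N -> nblocked a c = (z a + nblocked a.+1 c)%N.
Proof. by move=> ac; rewrite /nblocked big_ltn. Qed.

Lemma nblocked_nil a : nblocked a a = 0%N.
Proof. by rewrite /nblocked big_geq. Qed.

Lemma nblocked_le a c : (nblocked a c <= c - a)%N.
Proof.
elim: c => [|c IH]; first by rewrite /nblocked big_geq.
case: (leqP a c) => ac; last by rewrite /nblocked big_geq.
by rewrite nblocked_recr //; case: (z c) => /=; lia.
Qed.

Lemma nblocked_cat a m c : (a <= m <= c)%N -> nblocked a c = (nblocked a m + nblocked m c)%N.
Proof. by move=> /andP[am mc]; rewrite /nblocked (big_cat_nat am mc). Qed.

Lemma sum_blocked_rank_below (g : nat -> R) lo hi : (lo <= hi)%N ->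
  \sum_(lo <= v < hi) (z v)%:R * g (nblocked lo v) = \sum_(0 <= r < nblocked lo hi) g r.
Proof.
elim: hi => [|hi IH] lohi; first by rewrite /nblocked !big_geq.
case: (ltnP hi lo) => [hilo|lohi1].
  have -> : lo = hi.+1 by lia.
  by rewrite nblocked_nil !big_geq.
rewrite big_nat_recr //= IH // nblocked_recr //.
by case: (z hi); rewrite /= ?mul0r ?addr0 ?addn0 // mul1r addn1 big_nat_recr.
Qed.

Lemma sum_blocked_rank_above (g : nat -> R) lo hi : (lo <= hi)%N ->
  \sum_(lo <= u < hi) (z u)%:R * g (nblocked u.+1 hi) = \sum_(0 <= r < nblocked lo hi) g r.
Proof.
move=> lohi; have [n <-] : exists n, (lo + n)%N = hi by exists (hi - lo)%N; lia.
elim: n lo {lohi} => [|n IH] lo; first by rewrite addn0 nblocked_nil !big_geq.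
rewrite -addSnnS big_ltn ?IH ?(nblocked_ltn (a := lo)); try lia.
by case: (z lo); rewrite /= ?mul0r ?add0r // mul1r add1n big_nat_recr //= addrC.
Qed.

Lemma sum_blocked_exchange (F : nat -> nat -> R) M :
  \sum_(0 <= v < M) (z v)%:R * \sum_(0 <= r < nblocked 0 v) F r v
  = \sum_(0 <= r < M) \sum_(0 <= v < M) (z v && (r < nblocked 0 v)%N)%:R * F r v.
Proof.
rewrite [RHS]exchange_big_nat /=; apply: eq_big_nat => v /andP[_ vM].
rewrite (big_nat_widen _ _ M); last by have := nblocked_le 0 v; lia.
rewrite big_mkcond big_distrr /=; apply: eq_big_nat => r _.
by case: (z v); case: (r < nblocked 0 v)%N; rewrite /= ?mul1r ?mul0r.
Qed.

Lemma sum_blocked_from j M :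
  \sum_(0 <= v < M) (z v && (j <= nblocked 0 v)%N)%:R = (nblocked 0 M - j)%:R :> R.
Proof.
have -> : \sum_(0 <= v < M) (z v && (j <= nblocked 0 v)%N)%:R
    = \sum_(0 <= v < M) (z v)%:R * ((j <= nblocked 0 v)%N)%:R :> R.
  by apply: eq_big_nat => v _; case: (z v); rewrite ?mul1r ?mul0r.
rewrite (sum_blocked_rank_below (fun r => ((j <= r)%N)%:R)) //.
rewrite -[in RHS](minnn (nblocked 0 M)) -sum_nat_indicator; apply: eq_big_nat => r /andP[_ ->].
by rewrite andbT.
Qed.

End Blocked.

Section IntervalSums.
Variables (R : comPzRingType) (b d : R) (z : nat -> bool).

Definition miss s := b + d * (z s)%:R.
Definition survival a c := \prod_(a <= s < c) miss s.
Definition mean_age c := \sum_(0 <= a < c.+1) survival a c.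
Definition total_age M := \sum_(0 <= c < M.+1) mean_age c.
Definition geom n := \sum_(0 <= i < n.+1) b ^+ i.

Definition first_order M := \sum_(0 <= v < M) (z v)%:R * (geom v * geom (M - v.+1)).
Definition second_order M := \sum_(0 <= v < M) (z v)%:R * (geom (M - v.+1) *
  \sum_(0 <= u < v) (z u)%:R * (geom u * survival u.+1 v)).

Lemma survival_recr a c : (a <= c)%N -> survival a c.+1 = survival a c * miss c.
Proof. by move=> ac; rewrite /survival big_nat_recr. Qed.

Lemma survival_nil a : survival a a = 1.
Proof. by rewrite /survival big_geq. Qed.

Lemma mean_age0 : mean_age 0 = 1.
Proof. by rewrite /mean_age big_nat1 survival_nil. Qed.

Lemma mean_ageS c : mean_age c.+1 = 1 + miss c * mean_age c.
Proof.
rewrite /mean_age big_nat_recr //= survival_nil addrC big_distrr; congr (_ + _).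
by apply: eq_big_nat => a /andP[_ ac]; rewrite survival_recr // mulrC.
Qed.

Lemma geom0 : geom 0 = 1.
Proof. by rewrite /geom big_nat1. Qed.

Lemma geomS n : geom n.+1 = 1 + b * geom n.
Proof.
rewrite /geom big_ltn // big_distrr -(add0n 1%N) big_addn /=.
by congr (_ + _); apply: eq_big_nat => i _; rewrite addn1 exprS.
Qed.

Lemma geom_recr n : geom n.+1 = geom n + b ^+ n.+1.
Proof. by rewrite /geom big_nat_recr. Qed.

Lemma sum_geom_shift M v : (v < M)%N ->
  \sum_(v.+1 <= c < M.+1) b ^+ (c - v.+1) = geom (M - v.+1).
Proof.
move=> vM; rewrite /geom -(add0n v.+1) big_addn.
have -> : (M.+1 - v.+1 = (M - v.+1).+1)%N by lia.
by apply: eq_big_nat => i _; rewrite addnK.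
Qed.

Lemma mean_age_geomE c :
  mean_age c = geom c + \sum_(0 <= v < c) mean_age v * (d * (z v)%:R) * b ^+ (c - v.+1).
Proof.
elim: c => [|c IH]; first by rewrite mean_age0 geom0 big_geq ?addr0.
rewrite mean_ageS geomS big_nat_recr //= subnn expr0 mulr1.
have -> : \sum_(0 <= v < c) mean_age v * (d * (z v)%:R) * b ^+ (c.+1 - v.+1)
    = b * \sum_(0 <= v < c) mean_age v * (d * (z v)%:R) * b ^+ (c - v.+1).
  rewrite big_distrr /=; apply: eq_big_nat => v /andP[_ vc].
  by rewrite subSS -subnSK // exprS; ring.
by rewrite IH /miss; ring.
Qed.

Lemma mean_age_survivalE v :
  mean_age v = geom v + \sum_(0 <= u < v) geom u * (d * (z u)%:R) * survival u.+1 v.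
Proof.
elim: v => [|v IH]; first by rewrite mean_age0 geom0 big_geq ?addr0.
rewrite mean_ageS geomS big_nat_recr //= survival_nil mulr1.
have -> : \sum_(0 <= u < v) geom u * (d * (z u)%:R) * survival u.+1 v.+1
    = miss v * \sum_(0 <= u < v) geom u * (d * (z u)%:R) * survival u.+1 v.
  by rewrite big_distrr /=; apply: eq_big_nat => u /andP[_ uv]; rewrite survival_recr //; ring.
by rewrite IH /miss; ring.
Qed.

Lemma total_ageE M : total_age M =
  \sum_(0 <= c < M.+1) geom c + d * first_order M + d ^+ 2 * second_order M.
Proof.
rewrite /total_age (eq_big_nat _ _ (fun c _ => mean_age_geomE c)) big_split /=.
rewrite sum_nat_triangle -addrA; congr (_ + _).
rewrite big_nat_recr //= [X in _ + X = _]big_geq // addr0 /first_order /second_order.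
rewrite !big_distrr -big_split /=; apply: eq_big_nat => v /andP[_ vM].
rewrite -big_distrr /= sum_geom_shift // mean_age_survivalE.
have -> : \sum_(0 <= u < v) geom u * (d * (z u)%:R) * survival u.+1 v
    = d * \sum_(0 <= u < v) (z u)%:R * (geom u * survival u.+1 v).
  by rewrite big_distrr; apply: eq_big_nat => u _ /=; ring.
ring.
Qed.

End IntervalSums.

Lemma eq_total_age (R : comPzRingType) (b d : R) (z1 z2 : nat -> bool) M :
  (forall s, (s < M)%N -> z1 s = z2 s) -> total_age b d z1 M = total_age b d z2 M.
Proof.
move=> z12; apply: eq_big_nat => c /andP[_ cM]; apply: eq_big_nat => a _.
by apply: eq_big_nat => s /andP[_ sc]; rewrite /miss z12 //; lia.
Qed.

Section IntervalBounds.
Variables (R : numDomainType) (b d : R).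
Hypotheses (b_ge0 : 0 <= b) (b_le1 : b <= 1) (d_ge0 : 0 <= d).
Variable z : nat -> bool.
Local Notation geom := (geom b).
Local Notation survival := (survival b d z).

Lemma survival_ge0 a c : 0 <= survival a c.
Proof. by apply: prodr_ge0 => s _; rewrite addr_ge0 ?mulr_ge0. Qed.

Lemma survival_le_expn a c : survival a c <= (b + d) ^+ nblocked z a c.
Proof.
rewrite /survival /nblocked -prodrXr; apply: ler_prod => s _.
rewrite /miss; case: (z s) => /=.
- by rewrite mulr1 lexx andbT addr_ge0.
- by rewrite mulr0 addr0 b_ge0.
Qed.

Lemma geom_ge0 n : 0 <= geom n.
Proof. by apply: sumr_ge0 => i _; apply: exprn_ge0. Qed.

Lemma geom_le m n : (m <= n)%N -> geom m <= geom n.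
Proof.
move=> /subnK <-; elim: (n - m)%N => [|k IH]; first by rewrite add0n.
by rewrite addSn geom_recr (le_trans IH) // lerDl exprn_ge0.
Qed.

Lemma geom_mul_shift t a c : (a + t <= c)%N -> geom a * geom (c + t) <= geom (a + t) * geom c.
Proof.
elim: t a => [|t IH] a act; first by rewrite !addn0.
have step : geom a * geom (c + t).+1 <= geom a.+1 * geom (c + t).
  rewrite !geom_recr mulrDr mulrDl lerD2l [X in _ <= X]mulrC.
  by rewrite ler_pM ?geom_ge0 ?exprn_ge0 ?geom_le ?(ler_wiXn2l b_ge0 b_le1) //; lia.
by rewrite addnS (le_trans step) // -addSnnS IH //; lia.
Qed.

Lemma geom_mul_balanced a c a' c' : (a + c = a' + c')%N -> (a <= a')%N -> (a <= c')%N ->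
  geom a * geom c <= geom a' * geom c'.
Proof.
wlog a'c' : a' c' / (a' <= c')%N.
  move=> W acE aa' ac'; case: (leqP a' c') => ?; first exact: W.
  by rewrite [X in _ <= X]mulrC W //; lia.
move=> acE aa' _; have [t a'E] : exists t, a' = (a + t)%N by exists (a' - a)%N; lia.
have cE : c = (c' + t)%N by lia.
by rewrite a'E cE geom_mul_shift //; lia.
Qed.

Lemma sum_geom_survival_le v :
  \sum_(0 <= u < v) (z u)%:R * (geom u * survival u.+1 v)
  <= \sum_(0 <= r < nblocked z 0 v) (b + d) ^+ r * geom (v - r.+1).
Proof.
rewrite -(sum_blocked_rank_above z (fun r => (b + d) ^+ r * geom (v - r.+1))) //.
apply: ler_sum_nat => u /andP[_ uv]; rewrite ler_wpM2l // mulrC.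
rewrite ler_pM ?survival_ge0 ?geom_ge0 ?survival_le_expn ?geom_le //.
by have := nblocked_le z u.+1 v; lia.
Qed.

End IntervalBounds.

Section CentredWindow.
Variables (R : numDomainType) (b d : R).
Hypotheses (b_ge0 : 0 <= b) (b_le1 : b <= 1) (d_ge0 : 0 <= d).
Variables (k L : nat).
Hypothesis k_gt0 : (0 < k)%N.
(* T = 2k + L slots, numbered 0 .. M. *)
Local Notation M := (2 * k + L).-1.
Local Notation geom := (geom b).

Definition window v := (k <= v < k + L)%N.

Lemma nblocked_window v : (v <= k + L)%N -> nblocked window 0 v = (v - k)%N.
Proof.
elim: v => [|v IH] vkL; first by rewrite nblocked_nil.
by rewrite nblocked_recr // IH 1?ltnW // /window; case: (leqP k v) => ? /=; lia.
Qed.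

Lemma survival_window u v : (k <= u)%N -> (v <= k + L)%N ->
  survival b d window u.+1 v = (b + d) ^+ (v - u.+1).
Proof.
move=> ku vkL; rewrite /survival -prodr_const_nat; apply: eq_big_nat => s /andP[us sv].
by rewrite /miss /window (_ : (k <= s < k + L)%N) ?mulr1 //; lia.
Qed.

Lemma sum_geom_survival_window v : window v ->
  \sum_(0 <= u < v) (window u)%:R * (geom u * survival b d window u.+1 v)
  = \sum_(0 <= r < nblocked window 0 v) (b + d) ^+ r * geom (v - r.+1).
Proof.
move=> /andP[kv vkL].
rewrite -(sum_blocked_rank_above window (fun r => (b + d) ^+ r * geom (v - r.+1))) //.
apply: eq_big_nat => u /andP[_ uv]; case wu: (window u); rewrite ?mul0r // !mul1r.
move: wu => /andP[ku ukL].
have -> : nblocked window u.+1 v = (v - u.+1)%N.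
  by have := nblocked_cat window (a := 0) (m := u.+1) (c := v); rewrite !nblocked_window; lia.
have -> : (v - (v - u.+1).+1 = u)%N by lia.
by rewrite mulrC survival_window // ltnW.
Qed.

Definition layer_weight j v := geom (v - j) * geom (M - v.+1).

Definition layer z j :=
  \sum_(0 <= v < M) (z v && (j <= nblocked z 0 v)%N)%:R * layer_weight j v.

Lemma layer_window j :
  layer window j = \sum_(0 <= v < M) ((k + j <= v < k + L)%N)%:R * layer_weight j v.
Proof.
apply: eq_big_nat => v /andP[_ vM]; congr (_%:R * _).
rewrite /window; case: (leqP k v) => kv /=; last by lia.
case: (ltnP v (k + L)) => vkL /=; last by rewrite andbF.
by rewrite nblocked_window ?andbT; lia.
Qed.

Lemma layer_window_max z j : (nblocked z 0 M <= L)%N -> layer z j <= layer window j.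
Proof.
move=> zL; rewrite layer_window.
(* [layer_weight j] is at least [c] on [k + j, k + L) and at most [c] at any other slot. *)
apply: (ler_sum_threshold (c := geom k.-1 * geom (M - k - j))).
- by rewrite mulr_ge0 ?geom_ge0.
- by rewrite sum_nat_indicator sum_blocked_from ler_nat; lia.
- move=> v; rewrite mem_index_iota => /andP[_ vM] /andP[zv jv] notK.
  have : nblocked z 0 M = (nblocked z 0 v.+1 + nblocked z v.+1 M)%N by apply: nblocked_cat.
  rewrite nblocked_recr // zv => zM; have := nblocked_le z 0 v.
  rewrite /layer_weight; case: (ltnP v (k + j)) => vkj vz.
  + by apply: geom_mul_balanced; lia.
  + by rewrite mulrC; apply: geom_mul_balanced; lia.
- move=> v; rewrite mem_index_iota => /andP[_ vM] /andP[kjv vkL] _.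
  by apply: geom_mul_balanced; lia.
Qed.

Definition layers z := \sum_(0 <= r < M) (b + d) ^+ r * layer z r.+1.

Lemma first_order_layer z : first_order b z M = layer z 0.
Proof. by apply: eq_big_nat => v _; rewrite /layer_weight subn0 leq0n andbT. Qed.

Lemma layersE z : layers z = \sum_(0 <= v < M) (z v)%:R *
  (geom (M - v.+1) * \sum_(0 <= r < nblocked z 0 v) (b + d) ^+ r * geom (v - r.+1)).
Proof.
transitivity (\sum_(0 <= v < M) (z v)%:R *
  \sum_(0 <= r < nblocked z 0 v) (b + d) ^+ r * layer_weight r.+1 v).
  rewrite sum_blocked_exchange /layers; apply: eq_big_nat => r _; rewrite /layer big_distrr.
  by apply: eq_big_nat => v _ /=; rewrite mulrCA.
apply: eq_big_nat => v _; congr (_ * _); rewrite big_distrr.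
by apply: eq_big_nat => r _ /=; rewrite /layer_weight; ring.
Qed.

Lemma second_order_le_layers z : second_order b d z M <= layers z.
Proof.
rewrite layersE; apply: ler_sum_nat => v _.
by rewrite ler_wpM2l ?ler_wpM2l ?geom_ge0 ?sum_geom_survival_le.
Qed.

Lemma second_order_window : second_order b d window M = layers window.
Proof.
rewrite layersE; apply: eq_big_nat => v _.
by case wv: (window v); rewrite ?mul0r // sum_geom_survival_window.
Qed.

Theorem total_age_window_max z :
  (nblocked z 0 M <= L)%N -> total_age b d z M <= total_age b d window M.
Proof.
move=> zL; rewrite !total_ageE -!addrA lerD2l lerD //.
  by rewrite ler_wpM2l // !first_order_layer layer_window_max.
rewrite ler_wpM2l ?exprn_ge0 // second_order_window (le_trans (second_order_le_layers z)) //.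
by rewrite ler_sum_nat // => r _; rewrite ler_wpM2l ?exprn_ge0 ?addr_ge0 ?layer_window_max.
Qed.

End CentredWindow.

Section SupportingLines.
Variable R : realFieldType.

Definition subgradient (f : R -> R) (y D : R) :=
  forall x, 0 <= x <= 1 -> f y + D * (x - y) <= f x.

Lemma prod_affine_subgradient (I : Type) (r : seq I) (P : pred I) (c : I -> R) y :
  (forall t, 0 <= c t <= 1) -> 0 <= y <= 1 ->
  exists2 D, D <= 0 & subgradient (fun x => \prod_(t <- r | P t) (1 - x * c t)) y D.
Proof.
move=> c01 y01; rewrite /subgradient /=.
have fac_ge0 x t : 0 <= x <= 1 -> 0 <= 1 - x * c t.
  by move=> /andP[x0 x1]; have /andP[c0 c1] := c01 t; rewrite subr_ge0 mulr_ile1.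
elim: r => [|t r [D D_le0 subD]]; first by exists 0 => // x _; rewrite !big_nil mul0r addr0.
case Pt: (P t); last by exists D => // x x01; rewrite !big_cons Pt subD.
set g := fun x => \prod_(s <- r | P s) (1 - x * c s); rewrite -/(g y) in subD *.
have /andP[ct0 ct1] := c01 t; have gy0 : 0 <= g y by rewrite prodr_ge0 // => s _; apply: fac_ge0.
exists (- c t * g y + (1 - y * c t) * D).
  by rewrite mulNr addrC subr_le0 (le_trans (mulr_ge0_le0 (fac_ge0 _ _ y01) D_le0)) ?mulr_ge0.
move=> x x01; rewrite !big_cons Pt -/(g x) -/(g y).
apply: le_trans (ler_wpM2l (fac_ge0 _ t x01) (subD x x01)).
rewrite -subr_ge0 (_ : _ - _ = c t * - D * ((x - y) ^+ 2)); last by ring.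
by rewrite mulr_ge0 ?sqr_ge0 // mulr_ge0 // oppr_ge0.
Qed.

Lemma sum_subgradient (I : Type) (r : seq I) (F : I -> R -> R) y :
  (forall i, exists D, subgradient (F i) y D) ->
  exists D, subgradient (fun x => \sum_(i <- r) F i x) y D.
Proof.
move=> subF; elim: r => [|i r [D subD]].
  by exists 0 => x _; rewrite !big_nil mul0r addr0.
have [Di subDi] := subF i; exists (Di + D) => x x01.
by rewrite !big_cons mulrDl addrACA; apply: lerD; [exact: subDi | exact: subD].
Qed.

Lemma pmf_le1 (I : finType) (p : I -> R) i : is_pmf p -> 0 <= p i <= 1.
Proof.
move=> [p_ge0 <-]; rewrite p_ge0 (bigD1 i) //= lerDl.
by apply: sumr_ge0 => j _.
Qed.

Lemma pmf_card_gt0 (I : finType) (p : I -> R) : is_pmf p -> (0 < #|I|)%N.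
Proof.
move=> [_ p_sum]; rewrite lt0n; apply/negP => /eqP/card0_eq I0.
by move: p_sum; rewrite big_pred0 // => /esym/eqP; rewrite oner_eq0.
Qed.

Lemma uniform_pmf_sum (I : finType) : (0 < #|I|)%N -> \sum_(i : I) uniform_pmf I i = 1 :> R.
Proof.
by move=> n_gt0; rewrite /uniform_pmf sumr_const -[LHS]mulr_natl mulfV // pnatr_eq0 -lt0n.
Qed.

Lemma sum_uniform_le (I : finType) (f : R -> R) D (p : I -> R) :
  subgradient f (#|I|%:R^-1) D -> is_pmf p ->
  \sum_i f (uniform_pmf I i) <= \sum_i f (p i).
Proof.
move=> subf pp; have n_gt0 := pmf_card_gt0 pp.
apply: le_trans (ler_sum _ (fun i _ => subf _ (pmf_le1 i pp))).
by rewrite big_split /= -big_distrr /= sumrB (proj2 pp) uniform_pmf_sum // subrr mulr0 addr0.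
Qed.

End SupportingLines.

Lemma expect_prod (R : comPzSemiRingType) (I J : finType) (mu : J -> R) (P : pred I)
    (F : I -> J -> R) :
  \sum_j mu j = 1 ->
  \sum_(w : {ffun I -> J}) (\prod_i mu (w i)) * \prod_(i | P i) F i (w i)
  = \prod_(i | P i) \sum_j mu j * F i j.
Proof.
move=> mu1.
have splitP (w : {ffun I -> J}) : (\prod_i mu (w i)) * \prod_(i | P i) F i (w i)
    = \prod_i (mu (w i) * (if P i then F i (w i) else 1)).
  by rewrite [X in _ * X]big_mkcond -big_split.
rewrite (eq_bigr _ (fun w _ => splitP w)) [RHS]big_mkcond.
rewrite -(bigA_distr_bigA (fun i j => mu j * (if P i then F i j else 1))).
apply: eq_bigr => i _; case: (P i) => //.
by under eq_bigr do rewrite mulr1.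
Qed.

Section Payoff.
Variables (R : realFieldType) (N Nsub T : nat).
Implicit Types (p : 'I_N -> R) (q : 'I_Nsub -> R) (sigma : blocking Nsub T).
Implicit Types (w : bs_outcome N Nsub T) (alpha x : R).

Lemma age_prodE sigma w i k : (age sigma w i k)%:R
  = \sum_(0 <= a < k.+1) \prod_(a <= s < k) (~~ served sigma w i s)%:R :> R.
Proof.
elim: k => [|k IH]; first by rewrite big_nat1 big_geq.
rewrite big_nat_recr //= [X in _ + X]big_geq //.
have -> : \sum_(0 <= a < k.+1) \prod_(a <= s < k.+1) (~~ served sigma w i s)%:R
    = (~~ served sigma w i k)%:R *
      \sum_(0 <= a < k.+1) \prod_(a <= s < k) (~~ served sigma w i s)%:R :> R.
  by rewrite big_distrr; apply: eq_big_nat => a /andP[_ ak]; rewrite big_nat_recr //= mulrC.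
by rewrite -IH; case: (served sigma w i k); rewrite /= ?mul0r ?add0r // mul1r -addn1 natrD.
Qed.

Lemma servedE sigma w i (t : 'I_T) :
  served sigma w i t = ((w t).1 == i) && sigma (w t).2 t.
Proof.
apply/existsP/idP => [[t' /and3P[/eqP tt' wi wt]]|?]; last by exists t; rewrite eqxx.
by rewrite (_ : t = t') ?wi //; apply: val_inj.
Qed.

Lemma prod_nat_ord (F : nat -> R) a k : (k <= T)%N ->
  \prod_(a <= s < k) F s = \prod_(t : 'I_T | (a <= t < k)%N) F t.
Proof.
move=> kT; rewrite (big_nat_widen _ _ T) // big_geq_mkord.
by apply: eq_bigl => t /=; rewrite andbC.
Qed.

Definition avail q sigma t := \sum_j q j * (sigma j t)%:R.

Lemma pair_pmf_sum p q : \sum_i p i = 1 -> \sum_j q j = 1 ->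
  \sum_(x : 'I_N * 'I_Nsub) p x.1 * q x.2 = 1.
Proof.
move=> p1 q1; rewrite -(pair_bigA _ (fun i j => p i * q j)) /=.
by under eq_bigr do rewrite -big_distrr /= q1 mulr1.
Qed.

Lemma miss_prob p q sigma i t : \sum_i p i = 1 -> \sum_j q j = 1 ->
  \sum_(x : 'I_N * 'I_Nsub) p x.1 * q x.2 * (~~ ((x.1 == i) && sigma x.2 t))%:R
  = 1 - p i * avail q sigma t.
Proof.
move=> p1 q1; have negE (B : bool) : (~~ B)%:R = 1 - B%:R :> R.
  by case: B; rewrite ?subrr ?subr0.
under eq_bigr do rewrite negE mulrBr mulr1.
rewrite sumrB pair_pmf_sum //.
rewrite -(pair_bigA _ (fun i' j => p i' * q j * ((i' == i) && sigma j t)%:R)).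
rewrite (bigD1 i) //= [X in - (_ + X)]big1 => [|i' /negbTE i'i]; last first.
  by rewrite big1 // => j _; rewrite i'i mulr0.
rewrite addr0 /avail big_distrr; congr (1 - _).
by apply: eq_bigr => j _; rewrite eqxx /= mulrA.
Qed.

Lemma exp_ageE p q sigma i k : \sum_i p i = 1 -> \sum_j q j = 1 -> (k <= T)%N ->
  exp_age p q sigma i k = \sum_(0 <= a < k.+1)
    \prod_(t : 'I_T | (a <= t < k)%N) (1 - p i * avail q sigma t).
Proof.
move=> p1 q1 kT; rewrite /exp_age; under eq_bigr do rewrite age_prodE big_distrr /=.
rewrite exchange_big /=; apply: eq_big_nat => a _.
under eq_bigr => w _.
  rewrite prod_nat_ord //.
  under eq_bigr => t _ do rewrite servedE.
  over.
rewrite /bs_prob (@expect_prod _ _ _ (fun x : 'I_N * 'I_Nsub => p x.1 * q x.2) _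
  (fun t (x : 'I_N * 'I_Nsub) => (~~ ((x.1 == i) && sigma x.2 t))%:R)) ?pair_pmf_sum //.
by apply: eq_bigr => t _; rewrite miss_prob.
Qed.

Definition avail_sigma' alpha (t : 'I_T) : R := 1 - (in_window alpha t)%:R / Nsub%:R.

Definition user_cost alpha x := \sum_(k : 'I_T) \sum_(0 <= a < k.+1)
  \prod_(t : 'I_T | (a <= t < k)%N) (1 - x * avail_sigma' alpha t).

Lemma avail_sigma'_01 alpha (t : 'I_T) : (0 < Nsub)%N -> 0 <= avail_sigma' alpha t <= 1.
Proof.
move=> Nsub_gt0; rewrite /avail_sigma'; case: (in_window alpha t).
  2: by rewrite mul0r subr0 ler01 lexx.
by rewrite mul1r subr_ge0 invf_le1 ?ltr0n // ler1n Nsub_gt0 lerBlDr lerDl invr_ge0 ler0n.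
Qed.

Lemma mean_avail_sigma' alpha q x (t : 'I_T) : (0 < Nsub)%N -> \sum_j q j = 1 ->
  \sum_(j : 'I_Nsub)
    Nsub%:R^-1 * (1 - x * \sum_j' q j' * (~~ (in_window alpha t && (j == j')))%:R)
  = 1 - x * avail_sigma' alpha t.
Proof.
move=> Nsub_gt0 q1.
have availE (j : 'I_Nsub) : \sum_j' q j' * (~~ (in_window alpha t && (j == j')))%:R
    = 1 - (in_window alpha t)%:R * q j.
  case: (in_window alpha t) => /=; last first.
    by rewrite mul0r subr0 -[RHS]q1; apply: eq_bigr => j' _; rewrite mulr1.
  rewrite mul1r -[in RHS]q1 (bigD1 j) //= [in RHS](bigD1 j) //= eqxx mulr0 add0r.
  rewrite [in RHS]addrC addrK.
  by apply: eq_bigr => j' j'j; rewrite eq_sym (negbTE j'j) mulr1.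
under eq_bigr do rewrite availE.
rewrite -big_distrr /= sumrB sumr_const card_ord -big_distrr /= sumrB sumr_const card_ord.
rewrite -big_distrr /= q1 mulr1 /avail_sigma'.
by field; rewrite pnatr_eq0 -lt0n.
Qed.

Lemma mean_exp_age_sigma' alpha p q i k : \sum_i p i = 1 -> \sum_j q j = 1 ->
  (0 < Nsub)%N -> (k <= T)%N ->
  \sum_(v : adv_outcome Nsub T)
    (\prod_(t : 'I_T) Nsub%:R^-1) * exp_age p q (sigma' alpha v) i k
  = \sum_(0 <= a < k.+1)
      \prod_(t : 'I_T | (a <= t < k)%N) (1 - p i * avail_sigma' alpha t).
Proof.
move=> p1 q1 Nsub_gt0 kT; under eq_bigr do rewrite exp_ageE // big_distrr /=.
rewrite exchange_big /=; apply: eq_big_nat => a _.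
rewrite (@expect_prod _ _ _ (fun _ => Nsub%:R^-1) _ (fun (t : 'I_T) (j : 'I_Nsub) =>
  1 - p i * \sum_j' q j' * (~~ (in_window alpha t && (j == j')))%:R)).
  by apply: eq_bigr => t _; rewrite mean_avail_sigma'.
by rewrite sumr_const card_ord -[LHS]mulr_natl mulfV // pnatr_eq0 -lt0n.
Qed.

Lemma Delta_sigma'E alpha p q : \sum_i p i = 1 -> \sum_j q j = 1 -> (0 < Nsub)%N ->
  Delta_sigma' T alpha p q = T%:R^-1 * (N%:R^-1 * \sum_i user_cost alpha (p i)).
Proof.
move=> p1 q1 Nsub_gt0; rewrite /Delta_sigma' /Delta.
under eq_bigr do rewrite mulrCA big_distrr /=.
rewrite -big_distrr /= exchange_big /=; congr (_ * _).
rewrite /user_cost [in RHS]exchange_big [RHS]big_distrr /=; apply: eq_bigr => k _.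
under eq_bigr do rewrite mulrCA big_distrr /=.
rewrite -big_distrr /= exchange_big /=; congr (_ * _); apply: eq_bigr => i _.
by rewrite mean_exp_age_sigma' // ltnW.
Qed.

Lemma user_cost_subgradient alpha y : (0 < Nsub)%N -> 0 <= y <= 1 ->
  exists D, subgradient (user_cost alpha) y D.
Proof.
move=> Nsub_gt0 y01; apply: sum_subgradient => k; apply: sum_subgradient => a.
have [D _ subD] := prod_affine_subgradient (index_enum 'I_T) (fun t : 'I_T => (a <= t < k)%N)
  (fun t => avail_sigma'_01 alpha t Nsub_gt0) y01.
by exists D.
Qed.

Theorem uniform_best_response alpha p q : is_pmf p -> is_pmf q ->
  Delta_sigma' T alpha (uniform_pmf 'I_N) (uniform_pmf 'I_Nsub) <= Delta_sigma' T alpha p q.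
Proof.
move=> pp qq; have := pmf_card_gt0 pp; have := pmf_card_gt0 qq.
rewrite !card_ord => Nsub_gt0 N_gt0.
rewrite !Delta_sigma'E ?uniform_pmf_sum ?card_ord ?(proj2 pp) ?(proj2 qq) //.
rewrite !ler_wpM2l ?invr_ge0 ?ler0n //.
have y01 : 0 <= (#|'I_N|%:R^-1 : R) <= 1.
  by rewrite card_ord invr_ge0 ler0n invf_le1 ?ltr0n ?ler1n.
have [D subD] := user_cost_subgradient alpha Nsub_gt0 y01.
exact: sum_uniform_le subD pp.
Qed.

Definition miss0 : R := 1 - N%:R^-1.
Definition dmiss : R := N%:R^-1 * Nsub%:R^-1.

Definition uniform_payoff (z : 'I_T -> bool) := \sum_(k : 'I_T) \sum_(0 <= a < k.+1)
  \prod_(t : 'I_T | (a <= t < k)%N) (miss0 + dmiss * (z t)%:R).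

Definition blocked_slot sigma (t : 'I_T) := [exists j, ~~ sigma j t].

Lemma miss0_ge0 : (0 < N)%N -> 0 <= miss0.
Proof. by move=> N_gt0; rewrite subr_ge0 invf_le1 ?ler1n ?ltr0n. Qed.

Lemma miss0_le1 : miss0 <= 1.
Proof. by rewrite gerBl invr_ge0 ler0n. Qed.

Lemma dmiss_ge0 : 0 <= dmiss.
Proof. by rewrite mulr_ge0 ?invr_ge0 ?ler0n. Qed.

Lemma miss_uniform (B : bool) : 1 - N%:R^-1 * (1 - B%:R / Nsub%:R) = miss0 + dmiss * B%:R.
Proof. by rewrite /miss0 /dmiss; ring. Qed.

Lemma card_blocked_slot sigma t : (#|[set j | ~~ sigma j t]| <= 1)%N ->
  #|[set j | ~~ sigma j t]| = blocked_slot sigma t.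
Proof.
rewrite /blocked_slot; case: existsP => [[j bj]|nb] le1.
  suff : (0 < #|[set j | ~~ sigma j t]|)%N by lia.
  by apply/card_gt0P; exists j; rewrite inE.
by apply: eq_card0 => j; rewrite !inE; apply/negbTE/negP => bj; apply: nb; exists j.
Qed.

Lemma avail_uniform sigma t : (0 < Nsub)%N -> (#|[set j | ~~ sigma j t]| <= 1)%N ->
  avail (uniform_pmf 'I_Nsub) sigma t = 1 - (blocked_slot sigma t)%:R / Nsub%:R.
Proof.
move=> Nsub_gt0 le1; rewrite -card_blocked_slot //.
have cardE : #|[set j | ~~ sigma j t]| = (\sum_j (~~ sigma j t : nat))%N.
  by rewrite -sum1_card big_mkcond; apply: eq_bigr => j _; rewrite inE; case: (sigma j t).
have splitE : (\sum_j (sigma j t : nat) + \sum_j (~~ sigma j t : nat))%N = Nsub.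
  rewrite -big_split /= (eq_bigr (fun=> 1%N)) ?sum1_card ?card_ord // => j _.
  by case: (sigma j t).
rewrite /avail /uniform_pmf card_ord -big_distrr /= -natr_sum.
rewrite (_ : (\sum_j _)%N = Nsub - #|[set j | ~~ sigma j t]|)%N; last by lia.
rewrite natrB; last by lia.
by field; rewrite pnatr_eq0 -lt0n.
Qed.

Lemma Delta_uniformE sigma : (0 < N)%N -> (0 < Nsub)%N ->
  (forall t, #|[set j | ~~ sigma j t]| <= 1)%N ->
  Delta T (uniform_pmf 'I_N) (uniform_pmf 'I_Nsub) sigma
  = T%:R^-1 * uniform_payoff (blocked_slot sigma).
Proof.
move=> N_gt0 Nsub_gt0 le1; rewrite /Delta; congr (_ * _); apply: eq_bigr => k _.
have ageE i : exp_age (uniform_pmf 'I_N) (uniform_pmf 'I_Nsub) sigma i k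
    = \sum_(0 <= a < k.+1) \prod_(t : 'I_T | (a <= t < k)%N)
        (miss0 + dmiss * (blocked_slot sigma t)%:R).
  rewrite exp_ageE ?uniform_pmf_sum ?card_ord ?(ltnW (ltn_ord k)) //.
  apply: eq_big_nat => a _; apply: eq_bigr => t _.
  by rewrite avail_uniform // /uniform_pmf card_ord miss_uniform.
rewrite (eq_bigr _ (fun i _ => ageE i)) sumr_const card_ord mulrnAr -mulrnAl -mulr_natr.
by rewrite mulVf ?mul1r // pnatr_eq0 -lt0n.
Qed.

Lemma Delta_sigma'_uniformE alpha : (0 < N)%N -> (0 < Nsub)%N ->
  Delta_sigma' T alpha (uniform_pmf 'I_N) (uniform_pmf 'I_Nsub)
  = T%:R^-1 * uniform_payoff (in_window alpha).
Proof.
move=> N_gt0 Nsub_gt0; rewrite Delta_sigma'E ?uniform_pmf_sum ?card_ord //; congr (_ * _).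
rewrite {1}/uniform_pmf card_ord sumr_const card_ord mulrnAr -mulrnAl -mulr_natr mulVf ?mul1r;
  last by rewrite pnatr_eq0 -lt0n.
apply: eq_bigr => k _; apply: eq_big_nat => a _; apply: eq_bigr => t _.
by rewrite /avail_sigma' miss_uniform.
Qed.

End Payoff.

Lemma uniform_payoff_total_age (R : realFieldType) (N Nsub T : nat) (z : 'I_T.+1 -> bool) :
  uniform_payoff R N Nsub z
  = total_age (miss0 R N) (dmiss R N Nsub) (fun s => z (inord s)) T.
Proof.
rewrite /uniform_payoff /total_age -(big_mkord xpredT (fun c => \sum_(0 <= a < c.+1)
  \prod_(t : 'I_T.+1 | (a <= t < c)%N) (miss0 R N + dmiss R N Nsub * (z t)%:R))).
apply: eq_big_nat => c /andP[_ cT]; apply: eq_big_nat => a _.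
rewrite /survival (prod_nat_ord _ _ (ltnW cT)).
by apply: eq_bigr => t _; rewrite /miss inord_val.
Qed.

Lemma in_window_centred (R : realFieldType) (T k L : nat) (alpha : R) :
  alpha * T%:R = L%:R -> (1 - alpha) * T%:R = (2 * k)%:R ->
  forall t : 'I_T, in_window alpha t = (k <= t < k + L)%N.
Proof.
move=> aT akT t.
have lo : (1 - alpha) * T%:R / 2 = k%:R by rewrite akT natrM; field.
have hi : (1 + alpha) * T%:R / 2 = (k + L)%:R.
  rewrite (_ : (1 + alpha) * T%:R = (1 - alpha) * T%:R + 2 * (alpha * T%:R)); last by ring.
  by rewrite akT aT natrD natrM; field.
by rewrite /in_window lo hi ler_nat natr1 ler_nat.
Qed.

Lemma nblocked_blocked_slot (R : realFieldType) (Nsub T L : nat) (alpha : R)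
    (sigma : blocking Nsub T.+1) :
  alpha * T.+1%:R = L%:R -> feasible alpha sigma ->
  (nblocked (fun s => blocked_slot sigma (inord s)) 0 T <= L)%N.
Proof.
move=> aT [budget _]; rewrite aT ler_nat in budget; apply: (leq_trans _ budget).
apply: (@leq_trans (nblocked (fun s => blocked_slot sigma (inord s)) 0 T.+1)).
  by rewrite nblocked_recr // leq_addr.
rewrite /nblocked big_mkord exchange_big /=; apply: leq_sum => t _; rewrite inord_val.
by rewrite /blocked_slot; case: existsP => [[j bj]|_] //; rewrite (bigD1 j) //= bj.
Qed.

Theorem sigma'_best_response (R : realFieldType) (N Nsub T k L : nat) (alpha : R)
    (sigma : blocking Nsub T) :
  (0 < N)%N -> (0 < Nsub)%N -> alpha < 1 ->
  alpha * T%:R = L%:R -> (1 - alpha) * T%:R = (2 * k)%:R -> feasible alpha sigma ->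
  Delta T (uniform_pmf 'I_N) (uniform_pmf 'I_Nsub) sigma
  <= Delta_sigma' T alpha (uniform_pmf 'I_N) (uniform_pmf 'I_Nsub).
Proof.
move=> N_gt0 Nsub_gt0 a1 aT akT feas; have [_ le1] := feas.
rewrite Delta_uniformE // Delta_sigma'_uniformE // ler_wpM2l ?invr_ge0 ?ler0n //.
case: T sigma aT akT feas le1 => [|T] sigma aT akT feas _.
  by rewrite /uniform_payoff !big_ord0.
have TE : T.+1 = (2 * k + L)%N.
  by apply/eqP; rewrite -(eqr_nat R) natrD -akT -aT; apply/eqP; ring.
have k_gt0 : (0 < k)%N.
  have : 0 < (1 - alpha) * T.+1%:R by rewrite mulr_gt0 ?subr_gt0 ?ltr0n.
  by rewrite akT ltr0n muln_gt0 => /andP[].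
rewrite !uniform_payoff_total_age.
rewrite [X in _ <= X](@eq_total_age _ _ _ _ (window k L)) => [|s sT]; last first.
  by rewrite (in_window_centred aT akT) inordK // ltnS ltnW.
have := @total_age_window_max _ _ _ (miss0_ge0 R N_gt0) (miss0_le1 R N) (dmiss_ge0 R N Nsub)
  k L k_gt0 (fun s => blocked_slot sigma (inord s)).
by rewrite -TE /=; apply; apply: nblocked_blocked_slot aT feas.
Qed.

Unset Implicit Arguments.

Theorem theorem13 (R : realFieldType) (N Nsub T : nat) (alpha : R)
  (hN : (0 < N)%N) (hNsub : (2 <= Nsub)%N)
  (ha0 : 0 < alpha) (ha1 : alpha < 1)
  (haT : exists m : nat, alpha * T%:R = m%:R)
  (heven : exists k : nat, (1 - alpha) * T%:R = (2 * k)%:R) :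
  (forall (p : 'I_N -> R) (q : 'I_Nsub -> R), is_pmf p -> is_pmf q ->
     Delta_sigma' T alpha (uniform_pmf 'I_N) (uniform_pmf 'I_Nsub)
     <= Delta_sigma' T alpha p q)
  /\
  (forall sigma : blocking Nsub T, feasible alpha sigma ->
     Delta T (uniform_pmf 'I_N) (uniform_pmf 'I_Nsub) sigma
     <= Delta_sigma' T alpha (uniform_pmf 'I_N) (uniform_pmf 'I_Nsub)).
Proof.
have [[L aT] [k akT]] := (haT, heven).
split => [p q pp qq | sigma feas]; first exact: uniform_best_response.
by apply: sigma'_best_response aT akT feas => //; apply: leq_trans hNsub.
Qed.
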